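(* Let $S=\mathcal{M}[K,G,\Lambda;P]$ be a Rees matrix semigroup. If $|K|>1$ or $|\Lambda|>1$, then $\sigma_s(S)=2$. If $|K|=|\Lambda|=1$, then $S$ is a group.
   Context: For a group $G$, nonempty sets $K,\Lambda$ and a $\Lambda\times K$ matrix $P=(p_{\lambda,\kappa})$ with entries in $G$, the Rees matrix semigroup $\mathcal{M}[K,G,\Lambda;P]$ is the set $K\times G\times\Lambda$ with product $(\kappa,g,\lambda)(\mu,h,\nu)=(\kappa,gp_{\lambda,\mu}h,\nu)$. $\sigma_s(S)$ is the least positive integer $n$ such that $S$ is the union of $n$ proper subsemigroups, or $\infty$ if none exists. *)

From Stdlib Require Import Arith.

Set Implicit Arguments.

Record Group := {
  gcar :> Type;
  gmul : gcar -> gcar -> gcar;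
  gone : gcar;
  ginv : gcar -> gcar;
  gmulA : forall x y z, gmul x (gmul y z) = gmul (gmul x y) z;
  gmul1l : forall x, gmul gone x = x;
  gmul1r : forall x, gmul x gone = x;
  gmulVl : forall x, gmul (ginv x) x = gone;
  gmulVr : forall x, gmul x (ginv x) = gone
}.

Definition rees_mul {K L : Type} {G : Group} (P : L -> K -> G)
  (x y : K * G * L) : K * G * L :=
  match x, y with
  | (k, g, l), (m, h, n) => (k, gmul G g (gmul G (P l m) h), n)
  end.

Definition is_subsemigroup (T : Type) (op : T -> T -> T) (A : T -> Prop) :=
  forall x y, A x -> A y -> A (op x y).

Definition is_proper_subsemigroup (T : Type) (op : T -> T -> T) (A : T -> Prop) :=
  is_subsemigroup op A /\ exists x, ~ A x.

Definition covered_by (T : Type) (op : T -> T -> T) (n : nat) :=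
  0 < n /\
  exists A : nat -> T -> Prop,
    (forall i, i < n -> is_proper_subsemigroup op (A i)) /\
    (forall x, exists i, i < n /\ A i x).

Definition sigma_s_is (T : Type) (op : T -> T -> T) (n : nat) :=
  covered_by op n /\ forall m, covered_by op m -> n <= m.

Definition is_group (T : Type) (op : T -> T -> T) :=
  (forall x y z, op x (op y z) = op (op x y) z) /\
  exists e : T, (forall x, op e x = x /\ op x e = x) /\
    forall x, exists y, op x y = e /\ op y x = e.

(* A Rees matrix semigroup maps onto its first coordinate as a left-zero
   semigroup and onto its last coordinate as a right-zero semigroup: the
   first coordinate of a product is that of the left factor, the last that
   of the right factor.  So if [K] has two elements, fixing the first
   coordinate splits [S] into two complementary subsemigroups, and
   symmetrically for [Lambda]; no single proper subsemigroup covers [S], so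
   [sigma_s(S) = 2].  If [K = {k0}] and [Lambda = {l0}], then [S] is [G]
   with the sandwich product [g p h], [p = p_{l0,k0}], a group with identity
   [p^-1] and inverses [g |-> p^-1 g^-1 p^-1]. *)
From Stdlib Require Import Arith Lia Classical.

Section GroupCancel.

Variable G : Group.

Lemma gmulKl (x y : G) : gmul G (ginv G x) (gmul G x y) = y.
Proof. now rewrite gmulA, gmulVl, gmul1l. Qed.

Lemma gmulVKl (x y : G) : gmul G x (gmul G (ginv G x) y) = y.
Proof. now rewrite gmulA, gmulVr, gmul1l. Qed.

Lemma gmulKr (x y : G) : gmul G (gmul G y x) (ginv G x) = y.
Proof. now rewrite <- gmulA, gmulVr, gmul1r. Qed.

End GroupCancel.

Section SigmaTwo.

Variables (T : Type) (op : T -> T -> T).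

Lemma covered_by_ge2 m : covered_by op m -> 2 <= m.
Proof.
  intros [Hm [A [HA Hcover]]].
  destruct m as [|[|m]]; try lia.
  destruct (HA 0 ltac:(lia)) as [_ [x Hx]].
  destruct (Hcover x) as [i [Hi HAi]].
  replace i with 0 in HAi by lia.
  contradiction.
Qed.

Lemma sigma_s_eq2_of_split (Q : T -> Prop) a b :
  is_subsemigroup op Q -> is_subsemigroup op (fun x => ~ Q x) ->
  Q a -> ~ Q b -> sigma_s_is op 2.
Proof.
  intros HQ HnQ Qa nQb.
  split; [| exact covered_by_ge2].
  split; [lia |].
  exists (fun i x => if i =? 0 then Q x else ~ Q x). split.
  - intros [|i] Hi; simpl.
    + split; [exact HQ | now exists b].
    + split; [exact HnQ | now exists a].
  - intros x. destruct (classic (Q x)).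
    + exists 0; simpl; split; [lia | assumption].
    + exists 1; simpl; split; [lia | assumption].
Qed.

(* Every fibre of such an [f] is a subsemigroup, and so is its complement. *)
Lemma sigma_s_eq2_of_conservative_map (U : Type) (f : T -> U) a b :
  (forall x y, f (op x y) = f x \/ f (op x y) = f y) ->
  f a <> f b -> sigma_s_is op 2.
Proof.
  intros Hf Hab.
  apply (@sigma_s_eq2_of_split (fun x => f x = f a) a b); [| | reflexivity | auto].
  - intros x y Hx Hy. now destruct (Hf x y) as [-> | ->].
  - intros x y Hx Hy. now destruct (Hf x y) as [-> | ->].
Qed.

End SigmaTwo.

Section Rees.

Context {K L : Type} {G : Group} (P : L -> K -> G).

Lemma rees_mulA (x y z : K * G * L) :
  rees_mul P x (rees_mul P y z) = rees_mul P (rees_mul P x y) z.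
Proof.
  destruct x as [[k g] l], y as [[m h] n], z as [[o u] v]; simpl.
  now rewrite !gmulA.
Qed.

Lemma rees_mul_fst (x y : K * G * L) : fst (fst (rees_mul P x y)) = fst (fst x).
Proof. now destruct x as [[k g] l], y as [[m h] n]. Qed.

Lemma rees_mul_snd (x y : K * G * L) : snd (rees_mul P x y) = snd y.
Proof. now destruct x as [[k g] l], y as [[m h] n]. Qed.

Lemma sigma_s_rees_eq2_K (k1 k2 : K) (g : G) (l : L) :
  k1 <> k2 -> sigma_s_is (rees_mul P) 2.
Proof.
  intros Hk.
  apply (@sigma_s_eq2_of_conservative_map _ _ _ (fun x => fst (fst x))
           (k1, g, l) (k2, g, l)); [| exact Hk].
  intros x y. left. apply rees_mul_fst.
Qed.

Lemma sigma_s_rees_eq2_L (k : K) (g : G) (l1 l2 : L) :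
  l1 <> l2 -> sigma_s_is (rees_mul P) 2.
Proof.
  intros Hl.
  apply (@sigma_s_eq2_of_conservative_map _ _ _ snd (k, g, l1) (k, g, l2));
    [| exact Hl].
  intros x y. right. apply rees_mul_snd.
Qed.

Lemma rees_is_group_of_singletons (k0 : K) (l0 : L) :
  (forall k, k = k0) -> (forall l, l = l0) -> is_group (rees_mul P).
Proof.
  intros Hk Hl.
  set (p := P l0 k0).
  split; [exact rees_mulA |].
  exists (k0, ginv G p, l0). split.
  - intros [[k g] l]. rewrite (Hk k), (Hl l); simpl; fold p.
    split; [now rewrite gmulKl |].
    now rewrite gmulA, gmulKr.
  - intros [[k g] l]. rewrite (Hk k), (Hl l).
    exists (k0, gmul G (ginv G p) (gmul G (ginv G g) (ginv G p)), l0).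
    simpl; fold p. split.
    + now rewrite gmulVKl, gmulVKl.
    + now rewrite <- !gmulA, gmulKl, gmulVl, gmul1r.
Qed.

End Rees.

Theorem mainTheorem8 (K L : Type) (G : Group) (P : L -> K -> G) :
  inhabited K -> inhabited L ->
  (((exists k1 k2 : K, k1 <> k2) \/ (exists l1 l2 : L, l1 <> l2)) ->
     sigma_s_is (rees_mul P) 2) /\
  ((exists k0 : K, forall k, k = k0) -> (exists l0 : L, forall l, l = l0) ->
     is_group (rees_mul P)).
Proof.
  intros [k] [l]. split.
  - intros [[k1 [k2 Hk]] | [l1 [l2 Hl]]].
    + exact (sigma_s_rees_eq2_K P k1 k2 (gone G) l Hk).
    + exact (sigma_s_rees_eq2_L P k (gone G) l1 l2 Hl).
  - intros [k0 Hk] [l0 Hl].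
    exact (rees_is_group_of_singletons P k0 l0 Hk Hl).
Qed.
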